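(* The quotient map $\pi\colon\Pi_*\to\Pi_*/\mathbb{R}_+$ is a principal $\mathbb{R}_+$-bundle. That is, the $\mathbb{R}_+$-action on $\Pi_*$ is free, and whenever $\mathcal{P}_n\in\Pi_*$, $t_n\in\mathbb{R}_+$, $\mathcal{P}_n\to\mathcal{P}\in\Pi_*$ and $t_n\mathcal{P}_n\to t\mathcal{P}$ weakly, we have $t_n\to t$.
   Context: mm-spaces are triples $(X,d_X,\mu_X)$ with $(X,d_X)$ complete separable metric and $\mu_X$ a Borel probability measure, with $X=\operatorname{supp}\mu_X$. $\mathcal{X}$ is the set of their isomorphism classes under measure-preserving isometries of supports. Box distance: $\square(X,Y)$ is the infimum of $\varepsilon\ge0$ such that there exist Borel maps $\varphi,\psi$ from $[0,1)$ pushing Lebesgue measure to $\mu_X,\mu_Y$ and a Borel $I_0$ of measure $\ge1-\varepsilon$ with $|d_X(\varphi(s),\varphi(t))-d_Y(\psi(s),\psi(t))|\le\varepsilon$ on $I_0$. $Y\prec X$ means there is a 1-Lipschitz $f\colon X\to Y$ with $f_*\mu_X=\mu_Y$. A pyramid is a nonempty $\square$-closed subset of $\mathcal{X}$ that is downward closed under $\prec$ and such that any two elements are dominated by a common element. $\Pi$ is the set of pyramids. Weak convergence: $\mathcal{P}_n\to\mathcal{P}$ iff $\square(X,\mathcal{P}_n)\to0$ for $X\in\mathcal{P}$ and $\liminf\square(X,\mathcal{P}_n)>0$ for $X\notin\mathcal{P}$. $\mathbb{R}_+$ acts on $\Pi$ by $t\mathcal{P}=\{(X,t\,d_X,\mu_X):X\in\mathcal{P}\}$.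 $\Pi_*=\Pi\setminus\mathrm{Fix}(\Pi)$, with the quotient topology on $\Pi_*/\mathbb{R}_+$. A free action with quotient map $\pi$ is a principal $\mathbb{R}_+$-bundle if the translation function $\tau(e,e')$, defined for $\pi(e)=\pi(e')$ by $e'=\tau(e,e')e$, is continuous. *)

From HB Require Import structures.
From mathcomp Require Import all_boot all_order all_algebra.
From mathcomp Require Import all_classical all_reals all_analysis.
From mathcomp Require Import Rstruct Rstruct_topology.
Set Implicit Arguments. Unset Strict Implicit. Unset Printing Implicit Defensive.
Import Order.TTheory GRing.Theory Num.Theory.
Local Open Scope classical_set_scope.
Local Open Scope ring_scope.

Notation RR := Rdefinitions.R.

Definition is_metric (T : Type) (d : T -> T -> RR) : Prop :=
  (forall x y, 0 <= d x y) /\ (forall x y, d x y = 0 <-> x = y) /\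
  (forall x y, d x y = d y x) /\ (forall x y z, d x z <= d x y + d y z).

Definition dball (T : Type) (d : T -> T -> RR) (x : T) (r : RR) : set T :=
  [set y | d x y < r].

Definition d_open (T : Type) (d : T -> T -> RR) (U : set T) : Prop :=
  forall x, U x -> exists2 r : RR, 0 < r & dball d x r `<=` U.

Definition borel (T : Type) (d : T -> T -> RR) : set (set T) :=
  <<s d_open d >>.

Definition d_complete (T : Type) (d : T -> T -> RR) : Prop :=
  forall u : nat -> T,
    (forall e : RR, 0 < e -> exists N, forall m n, (N <= m)%N -> (N <= n)%N ->
        d (u m) (u n) < e) ->
    exists x, forall e : RR, 0 < e -> exists N, forall n, (N <= n)%N -> d (u n) x < e.

Definition d_separable (T : Type) (d : T -> T -> RR) : Prop :=
  exists u : nat -> T, forall x (e : RR), 0 < e -> exists n, d x (u n) < e.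

Definition borel_probability (T : Type) (d : T -> T -> RR) (mu : set T -> \bar RR)
  : Prop :=
  mu set0 = 0%E /\ mu setT = 1%E /\
  (forall A, borel d A -> (0 <= mu A)%E) /\
  (forall F : nat -> set T, (forall n, borel d (F n)) -> trivIset setT F ->
     (fun n => \sum_(0 <= i < n) mu (F i))%E @ \oo --> mu (\bigcup_n F n)).

(* X = supp mu_X : every open ball of positive radius has positive measure *)
Definition full_support (T : Type) (d : T -> T -> RR) (mu : set T -> \bar RR) : Prop :=
  forall x (r : RR), 0 < r -> (0 < mu (dball d x r))%E.

Record mmspace := MMSpace {
  mm_T :> Type;
  mm_d : mm_T -> mm_T -> RR;
  mm_mu : set mm_T -> \bar RR;
  mm_metric : is_metric mm_d;
  mm_complete : d_complete mm_d;
  mm_separable : d_separable mm_d;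
  mm_prob : borel_probability mm_d mm_mu;
  mm_supp : full_support mm_d mm_mu
}.
Arguments mm_d : clear implicits.
Arguments mm_mu : clear implicits.

Definition pushes (X Y : mmspace) (f : X -> Y) : Prop :=
  forall A, borel (mm_d Y) A -> mm_mu X (f @^-1` A) = mm_mu Y A.

(* Z is isomorphic to t X (X with metric t d_X), via a measure-preserving
   surjective isometry; for t = 1 this is mm-isomorphism. *)
Definition scaled_iso (t : RR) (X Z : mmspace) : Prop :=
  exists f : X -> Z, (forall x y, mm_d Z (f x) (f y) = t * mm_d X x y) /\
    (forall z, exists x, f x = z) /\ pushes f.

Definition I01 : set RR := `[0, 1[%classic.

Definition parameter (X : mmspace) (phi : RR -> X) : Prop :=
  forall A, borel (mm_d X) A ->
    @measurable _ (measurableTypeR RR) (I01 `&` phi @^-1` A) /\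
    lebesgue_measure (I01 `&` phi @^-1` A) = mm_mu X A.

Definition box_ok (X Y : mmspace) (e : RR) : Prop :=
  exists (phi : RR -> X) (psi : RR -> Y) (I0 : set RR),
    parameter phi /\ parameter psi /\
    @measurable _ (measurableTypeR RR) I0 /\ I0 `<=` I01 /\ ((1 - e)%:E <= lebesgue_measure I0)%E /\
    forall s t, I0 s -> I0 t ->
      `| mm_d X (phi s) (phi t) - mm_d Y (psi s) (psi t) | <= e.

Definition box (X Y : mmspace) : RR := inf [set e : RR | 0 <= e /\ box_ok X Y e].

Definition dominated (Y X : mmspace) : Prop :=
  exists f : X -> Y, (forall x x', mm_d Y (f x) (f x') <= mm_d X x x') /\ pushes f.

Definition box_set (X : mmspace) (P : set mmspace) : RR :=
  inf [set box X Y | Y in P].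

Definition box_closed (P : set mmspace) : Prop :=
  forall X, (forall e : RR, 0 < e -> exists2 Y, P Y & box X Y < e) -> P X.

Definition pyramid (P : set mmspace) : Prop :=
  (exists X, P X) /\ box_closed P /\
  (forall X Y, P X -> dominated Y X -> P Y) /\
  (forall X X', P X -> P X' -> exists2 Y, P Y & dominated X Y /\ dominated X' Y).

Definition wcvg (Pn : nat -> set mmspace) (P : set mmspace) : Prop :=
  (forall X, P X -> (fun n => box_set X (Pn n)) @ \oo --> (0 : RR)) /\
  (forall X, ~ P X -> 0 < limn_inf (fun n => box_set X (Pn n))).

Definition pscale (t : RR) (P : set mmspace) : set mmspace :=
  [set Z | exists2 X, P X & scaled_iso t X Z].

Definition fixed_pyramid (P : set mmspace) : Prop :=
  forall t : RR, 0 < t -> pscale t P = P.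

Definition Pi_star (P : set mmspace) : Prop := pyramid P /\ ~ fixed_pyramid P.

(* Freeness: a pyramid is closed under domination, so [s P ⊆ P] for [s <= 1]; if moreover
   [r P ⊆ P] for one [r > 1], then [r^n P ⊆ P] for all [n] and [P] is fixed by every
   [t > 0].  Continuity of the translation: if [t_n] does not tend to [t], then, say,
   [t_n >= t + e] infinitely often.  Every [X] in [(t + e) P] is [t + e] times some
   [X'] in [P], which is box-approximated by [Y'] in [P_n]; then [(t + e) Y'] lies in
   [t_n P_n] (by domination) and is box-close to [X], because rescaling both spaces by
   [a] multiplies the box distance by at most [max a 1].  Hence [(t + e) P ⊆ t P], and
   [P] is fixed.  The case [t_n <= t - e] is the same argument with the roles of [P_n]
   and [t_n P_n] exchanged. *)

From HB Require Import structures.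
From mathcomp Require Import all_boot all_order all_algebra.
From mathcomp Require Import all_classical all_reals all_analysis.
From mathcomp Require Import Rstruct Rstruct_topology.
From mathcomp Require Import lra.
Import Order.TTheory GRing.Theory Num.Theory.
Local Open Scope classical_set_scope.
Local Open Scope ring_scope.
Set Implicit Arguments. Unset Strict Implicit.

Section ScaleMetric.
Variables (T : Type) (d : T -> T -> RR) (c : RR).
Hypothesis c_gt0 : 0 < c.
Let cd x y := c * d x y.

Lemma dball_scale x r : dball cd x r = dball d x (r / c).
Proof.
by apply/seteqP; split => y; rewrite /dball /cd /= ltr_pdivlMr // mulrC.
Qed.

Lemma d_open_scale : d_open cd = d_open d.
Proof.
apply/funext => U; apply/propext; split => + x Ux => /(_ x Ux)[r r_gt0 sub].
  by exists (r / c); rewrite ?divr_gt0 // -dball_scale.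
by exists (r * c); rewrite ?mulr_gt0 // dball_scale mulfK ?gt_eqF.
Qed.

Lemma borel_scale : borel cd = borel d.
Proof. by rewrite /borel d_open_scale. Qed.

Lemma is_metric_scale : is_metric d -> is_metric cd.
Proof.
move=> [d_ge0 [d_eq0 [dC d_tri]]]; rewrite /cd; split; [|split; [|split]].
- by move=> x y; rewrite mulr_ge0 ?d_ge0 ?ltW.
- by move=> x y; rewrite -d_eq0; split => [/eqP|->]; rewrite ?mulr0 // mulf_eq0 gt_eqF // => /eqP.
- by move=> x y; rewrite dC.
- by move=> x y z; rewrite -mulrDr ler_wpM2l ?d_tri ?ltW.
Qed.

Lemma d_complete_scale : d_complete d -> d_complete cd.
Proof.
move=> d_cpl u u_cauchy; have [x ux] : exists x, forall e : RR, 0 < e ->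
    exists N, forall n, (N <= n)%N -> d (u n) x < e.
  apply: d_cpl => e e_gt0; have [N uN] := u_cauchy (c * e) (mulr_gt0 c_gt0 e_gt0).
  by exists N => m n mN nN; rewrite -(ltr_pM2l c_gt0); exact: uN.
exists x => e e_gt0; have [N uN] := ux (e / c) (divr_gt0 e_gt0 c_gt0).
by exists N => n nN; rewrite /cd mulrC -ltr_pdivlMr //; exact: uN.
Qed.

Lemma d_separable_scale : d_separable d -> d_separable cd.
Proof.
move=> [u u_dense]; exists u => x e e_gt0.
have [n un] := u_dense x (e / c) (divr_gt0 e_gt0 c_gt0).
by exists n; rewrite /cd mulrC -ltr_pdivlMr.
Qed.

Lemma borel_probability_scale mu : borel_probability d mu -> borel_probability cd mu.
Proof. by rewrite /borel_probability borel_scale. Qed.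

Lemma full_support_scale mu : full_support d mu -> full_support cd mu.
Proof. by move=> mu_supp x r r_gt0; rewrite dball_scale; apply: mu_supp; rewrite divr_gt0. Qed.

End ScaleMetric.

Definition mscale (c : RR) (c_gt0 : 0 < c) (X : mmspace) : mmspace :=
  @MMSpace X (fun x y => c * mm_d X x y) (mm_mu X)
    (is_metric_scale c_gt0 (@mm_metric X))
    (d_complete_scale c_gt0 (@mm_complete X))
    (d_separable_scale c_gt0 (@mm_separable X))
    (borel_probability_scale c_gt0 (@mm_prob X))
    (full_support_scale c_gt0 (@mm_supp X)).

Lemma borel_preimage_lipschitz T1 T2 (d1 : T1 -> T1 -> RR) (d2 : T2 -> T2 -> RR)
    (f : T1 -> T2) (K : RR) :
  0 < K -> (forall x y, d2 (f x) (f y) <= K * d1 x y) ->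
  forall A, borel d2 A -> borel d1 (f @^-1` A).
Proof.
move=> K_gt0 f_lip; have [borel0 borelC borelU] := @smallest_sigma_algebra _ setT (d_open d1).
apply: smallest_sub.
  split => [|A /= fA|F /= fF]; rewrite ?preimage_set0 //.
  - by rewrite setTD -preimage_setC -setTD; apply: borelC.
  - by rewrite preimage_bigcup; apply: borelU.
move=> A A_open; apply: sub_sigma_algebra => x /= /A_open[r r_gt0 rA].
exists (r / K); first by rewrite divr_gt0.
by move=> y /= xy; apply: rA; rewrite /dball /= (le_lt_trans (f_lip x y)) // mulrC -ltr_pdivlMr.
Qed.

Lemma scaled_iso_mscale t (t_gt0 : 0 < t) (X : mmspace) : scaled_iso t X (mscale t_gt0 X).
Proof. by exists id; do 2 split=> //; move=> z; exists z. Qed.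

Lemma scaled_iso1 (X : mmspace) : scaled_iso 1 X X.
Proof. by exists id; split=> [x y|]; rewrite ?mul1r //; split=> // z; exists z. Qed.

Lemma scaled_iso_comp a b (X Y Z : mmspace) : 0 < b ->
  scaled_iso a X Y -> scaled_iso b Y Z -> scaled_iso (b * a) X Z.
Proof.
move=> b_gt0 [f [f_iso [f_onto f_push]]] [g [g_iso [g_onto g_push]]].
exists (g \o f); split; first by move=> x y /=; rewrite g_iso f_iso mulrA.
split=> [z|A A_borel]; first by have [y <-] := g_onto z; have [x <-] := f_onto y; exists x.
rewrite comp_preimage f_push ?g_push //.
by apply: (borel_preimage_lipschitz b_gt0 _ A_borel) => y y'; rewrite g_iso.
Qed.

Lemma scaled_iso_dominated t (X Z : mmspace) : t <= 1 -> scaled_iso t X Z -> dominated Z X.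
Proof.
move=> t_le1 [f [f_iso [_ f_push]]]; exists f; split=> // x y.
by rewrite f_iso ler_piMl // (mm_metric X).1.
Qed.

Definition dominated_closed (P : set mmspace) : Prop :=
  forall X Y, P X -> dominated Y X -> P Y.

Lemma pyramid_dominated_closed (P : set mmspace) : pyramid P -> dominated_closed P.
Proof. by case=> _ [_ []]. Qed.

Section PyramidScaling.
Implicit Types (P Q : set mmspace) (X Y Z : mmspace).

Lemma pscale_mono t P Q : P `<=` Q -> pscale t P `<=` pscale t Q.
Proof. by move=> PQ Z [X /PQ QX XZ]; exists X. Qed.

Lemma pscale_mscale t (t_gt0 : 0 < t) P X : P X -> pscale t P (mscale t_gt0 X).
Proof. by move=> PX; exists X => //; apply: scaled_iso_mscale. Qed.

Lemma pscale_comp a b P : 0 < a -> 0 < b -> pscale a (pscale b P) = pscale (a * b) P.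
Proof.
move=> a_gt0 b_gt0; apply/seteqP; split=> Z.
  by move=> [Y [X PX XY] YZ]; exists X => //; apply: scaled_iso_comp XY YZ.
move=> [X PX [f [f_iso f_onto_push]]].
exists (mscale b_gt0 X); first exact: pscale_mscale.
by exists f; split=> // x y /=; rewrite f_iso mulrA.
Qed.

Lemma pscale_sub t P : dominated_closed P -> t <= 1 -> pscale t P `<=` P.
Proof. by move=> P_closed t_le1 Z [X PX XZ]; apply: P_closed PX (scaled_iso_dominated t_le1 XZ). Qed.

Lemma pscale1 P : dominated_closed P -> pscale 1 P = P.
Proof.
move=> P_closed; apply/seteqP; split; first exact: pscale_sub.
by move=> X PX; exists X => //; apply: scaled_iso1.
Qed.

Lemma pscale_dominated_closed t P : 0 < t -> dominated_closed P -> dominated_closed (pscale t P).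
Proof.
move=> t_gt0 P_closed Z W [X PX [f [f_iso [_ f_push]]]] [g [g_lip g_push]].
have tV_gt0 : 0 < t^-1 by rewrite invr_gt0.
suff PW : P (mscale tV_gt0 W).
  exists (mscale tV_gt0 W) => //; exists id; split=> [x y|].
    by rewrite /= mulrA mulfV ?gt_eqF ?mul1r.
  by split=> // w; exists w.
apply: (P_closed X) => //; exists (g \o f); split=> [x y|A].
  by rewrite /= -(mulKf (lt0r_neq0 t_gt0) (mm_d X x y)) -f_iso ler_pM2l.
rewrite /= borel_scale // => A_borel; rewrite comp_preimage f_push ?g_push //.
by apply: (borel_preimage_lipschitz ltr01 _ A_borel) => z z'; rewrite mul1r.
Qed.

End PyramidScaling.

Lemma exprn_unbounded (r u : RR) : 1 < r -> exists n, u <= r ^+ n.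
Proof.
move=> r_gt1; have r1_gt0 : 0 < r - 1 by rewrite subr_gt0.
have bernoulli n : 1 + n%:R * (r - 1) <= r ^+ n.
  elim: n => [|n IHn]; first by rewrite mul0r addr0 expr0.
  rewrite exprS -natr1; apply: le_trans (ler_wpM2l (ltW (lt_trans ltr01 r_gt1)) IHn).
  have : 0 <= n%:R * (r - 1) by rewrite mulr_ge0 ?ler0n ?ltW.
  nra.
exists (Num.bound (`|u| / (r - 1))); apply: le_trans (bernoulli _).
have := archi_boundP (divr_ge0 (normr_ge0 u) (ltW r1_gt0)); rewrite ltr_pdivrMr // => lt_u.
by rewrite (le_trans (ler_norm u)) // (le_trans (ltW lt_u)) // lerDr.
Qed.

Lemma fixed_of_pscale_expand (P : set mmspace) r :
  dominated_closed P -> 1 < r -> pscale r P `<=` P -> fixed_pyramid P.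
Proof.
move=> P_closed r_gt1 rP_sub; have r_gt0 : 0 < r := lt_trans ltr01 r_gt1.
have rnP_sub n : pscale (r ^+ n) P `<=` P.
  elim: n => [|n IHn]; first by rewrite expr0 pscale1.
  rewrite exprS -pscale_comp ?exprn_gt0 //.
  exact: subset_trans (pscale_mono IHn) rP_sub.
have uP_sub u : 0 < u -> pscale u P `<=` P.
  move=> u_gt0; have [n u_le] := exprn_unbounded u r_gt1.
  have rn_gt0 : 0 < r ^+ n := exprn_gt0 n r_gt0.
  rewrite -(divfK (lt0r_neq0 rn_gt0) u) -pscale_comp ?divr_gt0 //.
  apply: subset_trans (pscale_mono (rnP_sub n)) (pscale_sub P_closed _).
  by rewrite ler_pdivrMr // mul1r.
move=> t t_gt0; apply/seteqP; split; first exact: uP_sub.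
rewrite -{1}(pscale1 P_closed) -(mulfV (lt0r_neq0 t_gt0)) -pscale_comp ?invr_gt0 //.
by apply: pscale_mono; apply: uP_sub; rewrite invr_gt0.
Qed.

Lemma fixed_of_pscale_sub (P : set mmspace) a b : dominated_closed P ->
  0 < a -> a < b -> pscale b P `<=` pscale a P -> fixed_pyramid P.
Proof.
move=> P_closed a_gt0 ab bP_sub; have b_gt0 := lt_trans a_gt0 ab.
have aV_gt0 : 0 < a^-1 by rewrite invr_gt0.
apply: (@fixed_of_pscale_expand _ (a^-1 * b)) => //; first by rewrite ltr_pdivlMl // mulr1.
rewrite -pscale_comp //.
apply: subset_trans (pscale_mono bP_sub) _.
by rewrite pscale_comp // mulVf ?lt0r_neq0 // pscale1.
Qed.

(* [box] only sees the metric and the measure; stating it on raw data lets us compare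
   spaces whose metrics agree pointwise but not definitionally. *)
Definition parameter_of (T : Type) (d : T -> T -> RR) (mu : set T -> \bar RR)
    (phi : RR -> T) : Prop :=
  forall A, borel d A ->
    @measurable _ (measurableTypeR RR) (I01 `&` phi @^-1` A) /\
    lebesgue_measure (I01 `&` phi @^-1` A) = mu A.

Definition box_ok_of T1 (d1 : T1 -> T1 -> RR) mu1 T2 (d2 : T2 -> T2 -> RR) mu2 (e : RR) :
    Prop :=
  exists (phi : RR -> T1) (psi : RR -> T2) (I0 : set RR),
    parameter_of d1 mu1 phi /\ parameter_of d2 mu2 psi /\
    @measurable _ (measurableTypeR RR) I0 /\ I0 `<=` I01 /\
    ((1 - e)%:E <= lebesgue_measure I0)%E /\
    forall s t, I0 s -> I0 t -> `| d1 (phi s) (phi t) - d2 (psi s) (psi t) | <= e.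

Definition box_of T1 (d1 : T1 -> T1 -> RR) mu1 T2 (d2 : T2 -> T2 -> RR) mu2 : RR :=
  inf [set e : RR | 0 <= e /\ box_ok_of d1 mu1 d2 mu2 e].

Lemma boxE (X Y : mmspace) : box X Y = box_of (mm_d X) (mm_mu X) (mm_d Y) (mm_mu Y).
Proof. by []. Qed.

Section BoxOf.
Variables (T1 T2 : Type) (mu1 : set T1 -> \bar RR) (mu2 : set T2 -> \bar RR).

Lemma box_of_ge0 (d1 : T1 -> T1 -> RR) (d2 : T2 -> T2 -> RR) : 0 <= box_of d1 mu1 d2 mu2.
Proof.
rewrite /box_of; set S := [set e | _].
have [->|/set0P[e Se]] := eqVneq S set0; first by rewrite inf0.
by apply: lb_le_inf; [exists e | move=> x []].
Qed.

Lemma box_of_le1 (d1 : T1 -> T1 -> RR) (d2 : T2 -> T2 -> RR) : box_of d1 mu1 d2 mu2 <= 1.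
Proof.
rewrite /box_of; set S := [set e | _].
have [->|/set0P[_ [_ [phi [psi [_ [phi_par [psi_par _]]]]]]]] := eqVneq S set0.
  by rewrite inf0.
apply: ge_inf; first by exists 0 => x [].
split=> //; exists phi, psi, set0; do 4 split=> //.
by split=> [|s t []]; rewrite subrr measure0.
Qed.

Lemma parameter_of_scale T (d d' : T -> T -> RR) mu phi a : 0 < a ->
  (forall x y, d' x y = a * d x y) -> parameter_of d mu phi -> parameter_of d' mu phi.
Proof.
move=> a_gt0 d'E; have -> : d' = fun x y => a * d x y by apply/funext => x; apply/funext.
by rewrite /parameter_of borel_scale.
Qed.

(* The distortion bound scales by [a], while the measure bound [1 - e] must not grow. *)
Lemma box_ok_of_scale (d1 d1' : T1 -> T1 -> RR) (d2 d2' : T2 -> T2 -> RR) a e : 0 < a ->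
  (forall x y, d1' x y = a * d1 x y) -> (forall x y, d2' x y = a * d2 x y) ->
  0 <= e -> box_ok_of d1 mu1 d2 mu2 e -> box_ok_of d1' mu1 d2' mu2 (Num.max a 1 * e).
Proof.
move=> a_gt0 d1'E d2'E e_ge0 [phi [psi [I0 [phi_par [psi_par [I0_meas [I0_sub [I0_big dI0]]]]]]]].
exists phi, psi, I0; split; first exact: parameter_of_scale a_gt0 d1'E phi_par.
split; first exact: parameter_of_scale a_gt0 d2'E psi_par.
do 2 split=> //; split.
  by apply: le_trans I0_big; rewrite lee_fin lerB // ler_peMl // le_max lexx orbT.
move=> s t I0s I0t; rewrite d1'E d2'E -mulrBr normrM gtr0_norm //.
by apply: ler_pM; [exact: ltW | exact: normr_ge0 | rewrite le_max lexx | exact: dI0].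
Qed.

Lemma box_of_scale_le (d1 d1' : T1 -> T1 -> RR) (d2 d2' : T2 -> T2 -> RR) a : 0 < a ->
  (forall x y, d1' x y = a * d1 x y) -> (forall x y, d2' x y = a * d2 x y) ->
  box_of d1' mu1 d2' mu2 <= Num.max a 1 * box_of d1 mu1 d2 mu2.
Proof.
move=> a_gt0 d1'E d2'E; have K_gt0 : 0 < Num.max a 1 by rewrite lt_max ltr01 orbT.
rewrite /box_of; set S := [set e | 0 <= e /\ box_ok_of d1 mu1 d2 mu2 e].
have [S0|/set0P[e Se]] := eqVneq S set0.
  suff -> : [set e | 0 <= e /\ box_ok_of d1' mu1 d2' mu2 e] = set0 by rewrite S0 !inf0 mulr0.
  apply/seteqP; split=> // e [e_ge0 e_ok]; have aV_gt0 : 0 < a^-1 by rewrite invr_gt0.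
  have : S (Num.max a^-1 1 * e).
    split; first by rewrite mulr_ge0 // le_max ler01 orbT.
    by apply: (box_ok_of_scale aV_gt0) e_ok => // x y; rewrite ?d1'E ?d2'E mulKf ?lt0r_neq0.
  by rewrite S0.
rewrite -ler_pdivrMl //; apply: lb_le_inf; first by exists e.
move=> x [x_ge0 x_ok]; rewrite ler_pdivrMl //; apply: ge_inf; first by exists 0 => y [].
by split; [exact: mulr_ge0 (ltW K_gt0) x_ge0 | exact: box_ok_of_scale a_gt0 d1'E d2'E x_ge0 x_ok].
Qed.

End BoxOf.

Lemma box_set_le (X : mmspace) (P : set mmspace) Y : P Y -> box_set X P <= box X Y.
Proof.
move=> PY; apply: ge_inf; last by exists Y.
by exists 0 => _ [Z _ <-]; apply: box_of_ge0.
Qed.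

Lemma box_set_lt (X : mmspace) (P : set mmspace) e : P !=set0 -> box_set X P < e ->
  exists2 Y, P Y & box X Y < e.
Proof.
move=> [Y PY] /inf_lt[|_ [Z PZ <-] XZ]; last by exists Z.
by exists (box X Y), Y.
Qed.

Lemma box_set_bounded (X : mmspace) (Pn : nat -> set mmspace) :
  bounded_fun (fun n => box_set X (Pn n) : RR^o).
Proof.
exists 1; split=> // M M_gt1 n _ /=.
have [S0|/set0P[_ [Y PY _]]] := eqVneq [set box X Y | Y in Pn n] set0.
  by rewrite /box_set S0 inf0 normr0 ltW // (lt_trans ltr01).
rewrite ger0_norm; last first.
  by apply: lb_le_inf; [exists (box X Y), Y | move=> _ [Z _ <-]; apply: box_of_ge0].
by rewrite (le_trans (box_set_le X PY)) // (le_trans (box_of_le1 _ _ _ _)) ?ltW.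
Qed.

Definition frequently (Q : nat -> Prop) : Prop := forall N, exists2 n, (N <= n)%N & Q n.

Lemma frequently_near (P Q : nat -> Prop) :
  (\forall n \near \oo, P n) -> frequently Q -> exists n, P n /\ Q n.
Proof. by move=> [N _ NP] /(_ N)[n /NP Pn Qn]; exists n. Qed.

Lemma near_not_frequently (Q : nat -> Prop) : ~ frequently Q -> \forall n \near \oo, ~ Q n.
Proof. by move=> /existsNP[N /forall2NP nQ]; exists N => // n /= Nn; case: (nQ n). Qed.

Lemma lt_limn_inf_near (u : nat -> RR^o) c : bounded_fun u -> c < limn_inf u ->
  \forall n \near \oo, c < u n.
Proof.
move=> u_bnd; rewrite limn_infE // => /sup_gt[|_ [n0 _ <-] c_lt].
  by exists (infs u 0), 0%N.
exists n0 => // n /= n0n; apply: (lt_le_trans c_lt); apply: ge_inf; last by exists n.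
exact/has_lbound_sdrop/bounded_fun_has_lbound.
Qed.

Lemma not_cvg_frequently (u : nat -> RR) (t : RR) : ~ (u @ \oo --> t) ->
  exists2 e : RR, 0 < e & frequently (fun n => u n <= t - e) \/ frequently (fun n => t + e <= u n).
Proof.
move=> u_ncvg; apply: contrapT => u_near; apply: u_ncvg; apply/(@cvgrPdist_lt _ RR^o) => e e_gt0.
have [lo hi] : ~ frequently (fun n => u n <= t - e) /\ ~ frequently (fun n => t + e <= u n).
  by split=> freq; apply: u_near; exists e => //; [left | right].
apply: filterS2 (near_not_frequently lo) (near_not_frequently hi) => n /negP.
by rewrite -ltNge ltr_distlC => lo_n /negP; rewrite -ltNge => ->; rewrite andbT.
Qed.

Lemma pscale_sub_wlim (Qn : nat -> set mmspace) (Q R : set mmspace) (un : nat -> RR) (r : RR) :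
  (forall n, dominated_closed (Qn n)) -> (forall n, Qn n !=set0) -> dominated_closed Q ->
  (forall n, 0 < un n) -> 0 < r ->
  wcvg Qn Q -> wcvg (fun n => pscale (un n) (Qn n)) R ->
  frequently (fun n => r <= un n) -> pscale r Q `<=` R.
Proof.
move=> Qn_closed Qn_neq0 Q_closed un_gt0 r_gt0 [Qn_approx _] [_ R_far] r_le_un X [Y QY YX].
have rV_gt0 : 0 < r^-1 by rewrite invr_gt0.
set X' := mscale rV_gt0 X.
have QX' : Q X'.
  apply: (Q_closed _ _ QY); apply: (@scaled_iso_dominated (r^-1 * r)).
    by rewrite mulVf ?lt0r_neq0.
  exact: scaled_iso_comp YX (scaled_iso_mscale _ _).
apply: contrapT => R_nX; set K := Num.max r 1.
have K_gt0 : 0 < K by rewrite lt_max ltr01 orbT.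
set l := limn_inf (fun n => box_set X (pscale (un n) (Qn n))); have l_gt0 : 0 < l := R_far X R_nX.
have c_gt0 : 0 < l / 2 by rewrite divr_gt0.
have c_lt_l : l / 2 < l by rewrite ltr_pdivrMr // ltr_pMr // ltr1n.
have X_far := lt_limn_inf_near (box_set_bounded X _) c_lt_l.
have X'_close : \forall n \near \oo, box_set X' (Qn n) < l / 2 / K.
  exact: cvgr_lt (Qn_approx X' QX') _ (divr_gt0 c_gt0 K_gt0).
have [n [[far close] r_le]] := frequently_near (filterI X_far X'_close) r_le_un.
have [Y' QnY' X'Y'] := box_set_lt (Qn_neq0 n) close.
set Z := mscale r_gt0 Y'.
have unQnZ : pscale (un n) (Qn n) Z.
  have : pscale r (Qn n) Z := pscale_mscale r_gt0 QnY'.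
  rewrite -{1}(divfK (lt0r_neq0 (un_gt0 n)) r) mulrC -pscale_comp ?divr_gt0 //.
  by apply: pscale_mono; apply: pscale_sub; rewrite // ler_pdivrMr // mul1r.
have XZ_le : box X Z <= K * box X' Y'.
  by rewrite !boxE; apply: box_of_scale_le => // x y /=; rewrite mulrA mulfV ?lt0r_neq0 ?mul1r.
suff : l / 2 < l / 2 by rewrite ltxx.
apply: lt_trans (lt_le_trans far (le_trans (box_set_le X unQnZ) XZ_le)) _.
by rewrite mulrC -ltr_pdivlMr.
Qed.

Lemma wlim_sub_pscale (Qn : nat -> set mmspace) (Q R : set mmspace) (un : nat -> RR) (r : RR) :
  (forall n, dominated_closed (Qn n)) -> (forall n, Qn n !=set0) -> dominated_closed R ->
  (forall n, 0 < un n) -> 0 < r ->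
  wcvg Qn Q -> wcvg (fun n => pscale (un n) (Qn n)) R ->
  frequently (fun n => un n <= r) -> R `<=` pscale r Q.
Proof.
move=> Qn_closed Qn_neq0 R_closed un_gt0 r_gt0 QnQ unQnR un_le_r.
have rV_gt0 : 0 < r^-1 by rewrite invr_gt0.
have unV_gt0 n : 0 < (un n)^-1 by rewrite invr_gt0.
have : pscale r^-1 R `<=` Q.
  apply: (@pscale_sub_wlim (fun n => pscale (un n) (Qn n)) _ _ (fun n => (un n)^-1)) => //.
  - by move=> n; apply: pscale_dominated_closed.
  - by move=> n; have [X QnX] := Qn_neq0 n; exists (mscale (un_gt0 n) X); apply: pscale_mscale.
  - suff -> : (fun n => pscale (un n)^-1 (pscale (un n) (Qn n))) = Qn by [].
    by apply/funext => n; rewrite pscale_comp // mulVf ?lt0r_neq0 // pscale1.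
  - by move=> N; have [n Nn le_r] := un_le_r N; exists n; rewrite // lef_pV2 ?posrE.
move=> /(@pscale_mono r); rewrite pscale_comp // mulfV ?lt0r_neq0 // pscale1 //.
Qed.

Theorem proposition3p11 :
  (forall (P : set mmspace) (t : RR), Pi_star P -> 0 < t -> pscale t P = P -> t = 1)
  /\
  (forall (Pn : nat -> set mmspace) (tn : nat -> RR) (P : set mmspace) (t : RR),
     (forall n, Pi_star (Pn n)) -> (forall n, 0 < tn n) ->
     Pi_star P -> 0 < t ->
     wcvg Pn P ->
     wcvg (fun n => pscale (tn n) (Pn n)) (pscale t P) ->
     tn @ \oo --> t).
Proof.
split=> [P t [P_pyr P_nfix] t_gt0 tP | Pn tn P t Pn_star tn_gt0 [P_pyr P_nfix] t_gt0 PnP tPnP].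
  have P_closed := pyramid_dominated_closed P_pyr.
  case: (ltgtP t 1) => // [t_lt1 | t_gt1]; exfalso; apply: P_nfix.
  - by apply: (fixed_of_pscale_sub P_closed t_gt0 t_lt1); rewrite tP pscale1.
  - by apply: (fixed_of_pscale_sub P_closed ltr01 t_gt1); rewrite tP pscale1.
have P_closed := pyramid_dominated_closed P_pyr.
have Pn_closed n := pyramid_dominated_closed (Pn_star n).1.
have Pn_neq0 n := (Pn_star n).1.1.
apply: contrapT => tn_ncvg; apply: P_nfix.
have [e e_gt0 [tn_lo | tn_hi]] := not_cvg_frequently tn_ncvg.
- have te_gt0 : 0 < t - e by have [n _ /(lt_le_trans (tn_gt0 n))] := tn_lo 0%N.
  apply: (@fixed_of_pscale_sub _ (t - e) t P_closed te_gt0); first by rewrite gtrBl.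
  exact: wlim_sub_pscale Pn_closed Pn_neq0 (pscale_dominated_closed t_gt0 P_closed)
    tn_gt0 te_gt0 PnP tPnP tn_lo.
- apply: (@fixed_of_pscale_sub _ t (t + e) P_closed t_gt0); first by rewrite ltrDl.
  exact: pscale_sub_wlim Pn_closed Pn_neq0 P_closed tn_gt0 (addr_gt0 t_gt0 e_gt0) PnP tPnP tn_hi.
Qed.
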